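(* For all non-negative integers $s,k$ with $k\le s$, $$s(s-1)\cdots(s-k+1)\ \ge\ \Big(s-\frac{e-1}{e}\,k\Big)^k.$$ *)

From Stdlib Require Import Reals Lra Lia.
Open Scope R_scope.

Fixpoint falling (s k : nat) : R :=
  match k with
  | O => 1
  | S k' => falling s k' * (INR s - INR k')
  end.

(* Put s = u + k.  Since falling (u + k + 1) (k + 1) = (u + k + 1) falling (u + k) k,
   induction on k reduces the claim falling (u + k) k >= (u + k/e)^k to a one-step
   inequality which, for x = e u + k >= k, reads
   (x + 1)^(k+1) <= (x + (e - 1) k + e) x^k.  Writing (x + 1)^k = x^k (1 + 1/x)^k,
   it follows from (1 + 1/x)^k <= exp (k/x) <= 1 + (e - 1) k/x, the last step
   being the chord of the convex function exp over [0, 1]. *)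

From Stdlib Require Import Reals Lra Lia.
Open Scope R_scope.

Lemma exp_1_gt_1 : 1 < exp 1.
Proof. rewrite <- exp_0 at 1; apply exp_increasing; lra. Qed.

Lemma exp_le_chord (z : R) : 0 <= z <= 1 -> exp z <= 1 + (exp 1 - 1) * z.
Proof.
  intros [z_ge0 z_le1].
  destruct (Req_dec z 0) as [->|z_neq0]; [rewrite exp_0; lra|].
  destruct (Req_dec z 1) as [->|z_neq1]; [lra|].
  set (g := fun x => exp x - (exp 1 - 1) * x).
  set (g' := fun x => exp x - (exp 1 - 1)).
  assert (g_deriv : forall c, derivable_pt_lim g c (g' c)).
  { intro c; unfold g, g'.
    replace (exp c - (exp 1 - 1)) with (exp c - (exp 1 - 1) * 1) by ring.
    apply (derivable_pt_lim_minus exp (fun x => (exp 1 - 1) * x)).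
    - apply derivable_pt_lim_exp.
    - apply (derivable_pt_lim_scal id), derivable_pt_lim_id. }
  destruct (MVT_cor2 g g' 0 z ltac:(lra) (fun c _ => g_deriv c))
    as [c1 [mvt1 c1_bounds]].
  destruct (MVT_cor2 g g' z 1 ltac:(lra) (fun c _ => g_deriv c))
    as [c2 [mvt2 c2_bounds]].
  (* g' is increasing and g 0 = g 1, so the two secant slopes force g z <= g 0. *)
  assert (slopes : exp c1 < exp c2) by (apply exp_increasing; lra).
  unfold g, g' in mvt1, mvt2; rewrite exp_0 in mvt1.
  assert (0 <= z * (1 - z)) by nra.
  nra.
Qed.

Lemma pow_1_plus_le_exp (y : R) (n : nat) :
  0 <= y -> (1 + y) ^ n <= exp (INR n * y).
Proof.
  intro y_ge0; induction n as [|n IHn].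
  - simpl; rewrite Rmult_0_l, exp_0; lra.
  - rewrite S_INR, Rmult_plus_distr_r, Rmult_1_l, (Rplus_comm (INR n * y)), exp_plus.
    simpl.
    apply Rmult_le_compat; [lra | apply pow_le; lra | apply exp_ineq1_le | exact IHn].
Qed.

Lemma pow_1_plus_le_chord (y : R) (n : nat) :
  0 <= y -> INR n * y <= 1 -> (1 + y) ^ n <= 1 + (exp 1 - 1) * (INR n * y).
Proof.
  intros y_ge0 ny_le1.
  eapply Rle_trans; [apply pow_1_plus_le_exp; exact y_ge0|].
  apply exp_le_chord; split; [apply Rmult_le_pos; [apply pos_INR | exact y_ge0] | exact ny_le1].
Qed.

Lemma falling_succ (s k : nat) : falling (S s) (S k) = INR (S s) * falling s k.
Proof.
  induction k as [|k IHk]; [simpl; ring|].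
  change (falling (S s) (S (S k))) with (falling (S s) (S k) * (INR (S s) - INR (S k))).
  rewrite IHk; simpl falling; rewrite !S_INR; ring.
Qed.

Lemma pow_succ_shift_le (x : R) (k : nat) : 0 < x -> INR k <= x ->
  (x + 1) ^ S k <= (x + (exp 1 - 1) * INR k + exp 1) * x ^ k.
Proof.
  intros x_gt0 k_le_x.
  pose proof exp_1_gt_1 as e_gt1.
  assert (kx_le1 : INR k * / x <= 1).
  { apply (Rmult_le_reg_r x); [exact x_gt0|].
    rewrite Rmult_assoc, Rinv_l; lra. }
  assert (chord := pow_1_plus_le_chord (/ x) k
    ltac:(left; apply Rinv_0_lt_compat; lra) kx_le1).
  assert (split_pow : (x + 1) ^ k = x ^ k * (1 + / x) ^ k).
  { rewrite <- Rpow_mult_distr; f_equal; field; lra. }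
  (* (x + 1) (x + (e - 1) k) <= x (x + (e - 1) k + e) is exactly k <= x. *)
  assert (key : (x + 1) * (1 + (exp 1 - 1) * (INR k * / x))
                <= x + (exp 1 - 1) * INR k + exp 1).
  { apply (Rmult_le_reg_r x); [exact x_gt0|].
    replace ((x + 1) * (1 + (exp 1 - 1) * (INR k * / x)) * x)
      with ((x + 1) * (x + (exp 1 - 1) * INR k)) by (field; lra).
    assert (0 <= (exp 1 - 1) * (x - INR k)) by (apply Rmult_le_pos; lra).
    nra. }
  assert (xk_gt0 : 0 < x ^ k) by (apply pow_lt; lra).
  change ((x + 1) ^ S k) with ((x + 1) * (x + 1) ^ k); rewrite split_pow.
  apply (Rle_trans _ ((x + 1) * (1 + (exp 1 - 1) * (INR k * / x)) * x ^ k)); [|nra].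
  assert (0 <= (x + 1) * x ^ k) by nra.
  nra.
Qed.

Lemma shifted_pow_step (u : R) (k : nat) : 0 <= u ->
  (u + INR (S k) / exp 1) ^ S k <= (u + INR k + 1) * (u + INR k / exp 1) ^ k.
Proof.
  intro u_ge0.
  pose proof exp_1_gt_1 as e_gt1.
  assert (c_gt0 : 0 < / exp 1) by (apply Rinv_0_lt_compat; lra).
  assert (ec : exp 1 * / exp 1 = 1) by (apply Rinv_r; lra).
  destruct k as [|k'].
  { simpl; assert (/ exp 1 < 1)
      by (apply (Rmult_lt_reg_l (exp 1)); [lra | rewrite ec; lra]).
    unfold Rdiv; lra. }
  set (k := S k').
  set (x := exp 1 * u + INR k).
  assert (k_gt0 : 0 < INR k) by (apply lt_0_INR; unfold k; lia).
  assert (bound := pow_succ_shift_le x k ltac:(unfold x; nra) ltac:(unfold x; nra)).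
  replace (x + (exp 1 - 1) * INR k + exp 1) with (exp 1 * (u + INR k + 1))
    in bound by (unfold x; ring).
  replace (u + INR (S k) / exp 1) with ((x + 1) * / exp 1)
    by (rewrite S_INR; unfold x; field; lra).
  replace (u + INR k / exp 1) with (x * / exp 1) by (unfold x; field; lra).
  rewrite !Rpow_mult_distr.
  change ((/ exp 1) ^ S k) with (/ exp 1 * (/ exp 1) ^ k).
  replace ((u + INR k + 1) * (x ^ k * (/ exp 1) ^ k))
    with (exp 1 * (u + INR k + 1) * x ^ k * (/ exp 1 * (/ exp 1) ^ k))
    by (transitivity (exp 1 * / exp 1 * ((u + INR k + 1) * (x ^ k * (/ exp 1) ^ k)));
        [ring | rewrite ec; ring]).
  apply Rmult_le_compat_r; [apply Rmult_le_pos; [lra | apply pow_le; lra] | exact bound].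
Qed.

Lemma falling_add_ge (u k : nat) :
  falling (u + k) k >= (INR u + INR k / exp 1) ^ k.
Proof.
  induction k as [|k IHk]; [simpl; lra|].
  rewrite Nat.add_succ_r, falling_succ, S_INR, plus_INR.
  apply Rle_ge, (Rle_trans _ _ _ (shifted_pow_step (INR u) k (pos_INR u))).
  apply Rmult_le_compat_l; [pose proof (pos_INR u); pose proof (pos_INR k); lra|].
  apply Rge_le, IHk.
Qed.

Theorem lemma3 (s k : nat) (hks : (k <= s)%nat) :
  falling s k >= (INR s - (exp 1 - 1) / exp 1 * INR k) ^ k.
Proof.
  pose proof exp_pos 1.
  replace s with ((s - k) + k)%nat by lia.
  replace (INR (s - k + k) - (exp 1 - 1) / exp 1 * INR k)
    with (INR (s - k) + INR k / exp 1) by (rewrite plus_INR; field; lra).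
  apply falling_add_ge.
Qed.
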